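(* Let $G$ be labeled by an $\mathcal{AL}$ labeling $\langle r,d_1,d_2\rangle$, and let $x\neq r$ be a black node that belongs to class $C$ or $D$. Then $\mathit{C\_or\_D}(x)$ returns ``$C$'' iff $x\in C$ and ``$D$'' iff $x\in D$. The robot is in node $x$ when $\mathit{C\_or\_D}(x)$ exits. In the call $\mathit{C\_or\_D}(x)$ the robot needs $O(d_1\log\Delta)$ bits of memory, and the total number of edge traversals is $O(\Delta^{d_1+3})$.
   Context: $G$ is an undirected connected anonymous graph (loops and multiple edges allowed) of maximum degree $\Delta$ and diameter $D$, with ports $0,\dots,\mathtt{deg}(v)-1$ at each node $v$; the robot sees the degree, the color of the current node and the entry port and moves by choosing exit ports. $\mathcal{AL}$ labeling $\langle r,d_1,d_2\rangle$: root $r$; $d(\cdot,\cdot)$ graph distance; integers $d_1\ge 2$, $d_2$ with $\lfloor d_2/2\rfloor\ge d_1$; $q=d_1+d_2+2$; classes $C=\{v:d(r,v)\bmod q=0\}$, $D=\{v:d(r,v)\bmod q=1\}$, $A=\{v:d(r,v)\bmod q=d_2+1\}$, $B=\{v:d(r,v)\bmod q=d_1+d_2+1\}$; nodes of $A\cup B\cup C\cup D$ are black, others white; it is assumed $D\ge d_1+d_2+1$. A $\mathbf{B}$-node is a black node all of whose neighbors are black. White local search from $u$ within radius $\ell$: the recursive procedure $\mathit{WLS}(v,k,\mathit{inport})$, called as $\mathit{WLS}(u,\ell,-1)$: if $k=0$ report $v$; otherwise, if $v$ is black and $k\ne\ell$, return; otherwise for each port $\mathit{outport}\neq\mathit{inport}$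 of $v$ in increasing order, move through it to neighbor $w$, call $\mathit{WLS}(w,k-1,\text{entry port at }w)$, and move back to $v$. Procedure $\mathit{Is\_B}(y)$: if $y$ is a $\mathbf{B}$-node, return ``$\mathbf{B}$-node''. Otherwise perform a white local search from $y$ within radius $d_1$; as soon as a reported node is black and has no $\mathbf{B}$-node neighbor, return ``$B$''; otherwise return ``$D$''. The robot ends at $y$. Procedure $\mathit{C\_or\_D}(x)$: if $x$ is not a $\mathbf{B}$-node, return ``$D$''. Otherwise perform a white local search from $x$ within radius $1$; for each reported black neighbor $y$, run $\mathit{Is\_B}(y)$; as soon as some $\mathit{Is\_B}(y)$ returns ``$B$'', return ``$C$''; if none does, return ``$D$''. The robot ends at $x$. *)

From mathcomp Require Import all_boot.
Unset Printing Implicit Defensive.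

(* Anonymous port-labelled graphs (loops and multiple edges allowed).       *)
(* Port p < deg v of node v leads to node nbr v p, entering it through      *)
(* port ent v p.                                                            *)
Record pgraph := PGraph {
  pV : finType;
  pdeg : pV -> nat;
  pnbr : pV -> nat -> pV;
  pent : pV -> nat -> nat;
  pax : forall v p, p < pdeg v ->
      [/\ pent v p < pdeg (pnbr v p),
          pnbr (pnbr v p) (pent v p) = v &
          pent (pnbr v p) (pent v p) = p]
}.

Section Graph.
Variable G : pgraph.
Local Notation V := (pV G).
Local Notation deg := (pdeg G).
Local Notation nbr := (pnbr G).
Local Notation ent := (pent G).

Definition ports (v : V) : seq nat := iota 0 (deg v).

Fixpoint reach (k : nat) (u v : V) : bool :=
  if k is k'.+1 then (u == v) || has (fun p => reach k' (nbr u p) v) (ports u)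
  else u == v.

Definition connected : Prop := forall u v : V, exists k, reach k u v.

(* graph distance (correct for connected graphs: any node is reachable
   within #|V| steps) *)
Definition dist (u v : V) : nat := find (fun k => reach k u v) (iota 0 #|V|.+1).

Definition diam : nat := \max_(u : V) \max_(v : V) dist u v.
Definition maxdeg : nat := \max_(v : V) deg v.

Fixpoint follow (v : V) (ms : seq nat) : V :=
  if ms is p :: ms' then follow (nbr v p) ms' else v.

Variables (r : V) (d1 d2 : nat).
Definition qq := d1 + d2 + 2.
Definition inC (v : V) : bool := dist r v %% qq == 0.
Definition inD (v : V) : bool := dist r v %% qq == 1.
Definition inA (v : V) : bool := dist r v %% qq == d2 + 1.
Definition inB (v : V) : bool := dist r v %% qq == d1 + d2 + 1.
Definition black (v : V) : bool := [|| inA v, inB v, inC v | inD v].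
Definition isBnode (v : V) : bool := black v && all (fun p => black (nbr v p)) (ports v).

(* Procedures, as executions: (result, sequence of exit ports taken).      *)
(* Each execution starts and (as we prove) ends at the same node.          *)
Inductive answer := AnsBnode | AnsB | AnsC | AnsD.

Definition answer_eqb (a b : answer) : bool :=
  match a, b with
  | AnsBnode, AnsBnode | AnsB, AnsB | AnsC, AnsC | AnsD, AnsD => true
  | _, _ => false
  end.

Fixpoint scan (g : nat -> bool * seq nat) (ps : seq nat) : bool * seq nat :=
  match ps with
  | [::] => (false, [::])
  | p :: ps' =>
      let (b, ms) := g p in
      if b then (true, ms)
      else let (b', ms') := scan g ps' in (b', ms ++ ms')
  end.

(* Test whether the current node v is a B-node: the robot sees the colour
   of v, and visits every neighbour (and comes back) to see its colour. *)
Definition bnode_test (v : V) : bool * seq nat :=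
  (isBnode v, flatten [seq [:: p; ent v p] | p <- ports v]).

(* White local search WLS(v,k,inport) within radius l; [f] is the action
   performed at each reported node (it returns to that node); the search
   stops as soon as [f] succeeds, the robot backtracking to the start. *)
Fixpoint wls (f : V -> bool * seq nat) (l k : nat) (v : V) (inport : option nat)
  : bool * seq nat :=
  match k with
  | 0 => f v
  | k'.+1 =>
      if black v && (k != l) then (false, [::])
      else scan (fun p =>
                   let w := nbr v p in let e := ent v p in
                   let (b, ms) := wls f l k' w (Some e) in
                   (b, p :: ms ++ [:: e]))
                [seq p <- ports v | Some p != inport]
  end.

Definition isB_report (u : V) : bool * seq nat :=
  if black u then
    let (hasBn, ms) :=
      scan (fun p => let w := nbr u p in let e := ent u p in
                     let (bn, m) := bnode_test w in (bn, p :: m ++ [:: e]))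
           (ports u) in
    (~~ hasBn, ms)
  else (false, [::]).

Definition Is_B (y : V) : answer * seq nat :=
  let (bn, m0) := bnode_test y in
  if bn then (AnsBnode, m0)
  else let (found, m1) := wls isB_report d1 d1 y None in
       (if found then AnsB else AnsD, m0 ++ m1).

Definition CorD_report (y : V) : bool * seq nat :=
  if black y then let (a, m) := Is_B y in (answer_eqb a AnsB, m)
  else (false, [::]).

Definition C_or_D (x : V) : answer * seq nat :=
  let (bn, m0) := bnode_test x in
  if ~~ bn then (AnsD, m0)
  else let (found, m1) := wls CorD_report 1 1 x None in
       (if found then AnsC else AnsD, m0 ++ m1).

End Graph.

(* Memory model: a robot with a memory of bits.  At each step it sees the  *)
(* degree and colour of the current node and the entry port (None if it   *)
(* has not moved yet), updates its memory and either moves through a port *)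
(* or halts with an answer.                                               *)
Inductive action := AMove of nat | AHalt of answer.

Record agent := Agent {
  a_init : seq bool;
  a_step : seq bool -> nat * bool * option nat -> seq bool * action
}.

Fixpoint arun (G : pgraph) (col : pV G -> bool) (A : agent) (fuel : nat)
  (m : seq bool) (v : pV G) (e : option nat)
  : seq (seq bool) * seq nat * option answer :=
  match fuel with
  | 0 => ([:: m], [::], None)
  | fuel'.+1 =>
      let (m', act) := a_step A m (pdeg G v, col v, e) in
      match act with
      | AHalt a => ([:: m; m'], [::], Some a)
      | AMove p =>
          let '(ms, ps, res) := arun G col A fuel' m' (pnbr G v p) (Some (pent G v p)) in
          (m :: ms, p :: ps, res)
      end
  end.

Definition nbits (n : nat) : nat := (trunc_log 2 n).+1.

(* Distances to the root change by at most one along an edge, so the residue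
   mod q of a neighbour differs from the residue of the node by at most one.
   Hence every C-node is a B-node, and the parent of a C-node x lies in class B:
   it is not a B-node, and following parent ports d1 times it reaches an
   A-node, which is black without B-node neighbours, so Is_B answers B there
   and C_or_D(x) answers C.  If x is a D-node, its black neighbours are C-nodes
   (B-nodes) or D-nodes; a white search of radius d1 from a D-node only
   reports D-nodes, each of which has a C-node parent, so no Is_B answers B
   and C_or_D(x) answers D.
   The robot executing the nested searches only stores the stack of entry
   ports back to x, one per nesting level, hence at most d1 + 2 port numbers
   of O(log Δ) bits; its walk is a search tree of depth d1 + 3 and branching
   at most Δ. *)

From Stdlib Require Import PArith.
From Pilot Require Import Defs.
From mathcomp Require Import all_boot zify.
Set Implicit Arguments. Unset Strict Implicit.

Section PortGraph.
Variable G : pgraph.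
Local Notation V := (pV G).
Local Notation deg := (pdeg G).
Local Notation nbr := (pnbr G).
Local Notation ent := (pent G).
Local Notation reach := (reach G).
Local Notation dist := (dist G).

Lemma mem_ports v p : (p \in ports G v) = (p < deg v).
Proof. by rewrite mem_iota. Qed.

Lemma size_ports v : size (ports G v) = deg v.
Proof. exact: size_iota. Qed.

Lemma ent_lt v p : p < deg v -> ent v p < deg (nbr v p).
Proof. by case/(pax G). Qed.

Lemma nbr_ent v p : p < deg v -> nbr (nbr v p) (ent v p) = v.
Proof. by case/(pax G). Qed.

Lemma ent_ent v p : p < deg v -> ent (nbr v p) (ent v p) = p.
Proof. by case/(pax G). Qed.

Lemma deg_le_maxdeg v : deg v <= maxdeg G.
Proof. exact: (@leq_bigmax _ (fun v => deg v) v). Qed.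

Lemma reach_refl k u : reach k u u.
Proof. by case: k => [|k] /=; rewrite eqxx. Qed.

Lemma reach_nbr k u p v : p < deg u -> reach k (nbr u p) v -> reach k.+1 u v.
Proof. by move=> pu uv /=; apply/orP; right; apply/hasP; exists p; rewrite ?mem_ports. Qed.

Lemma reachS k u v : reach k u v -> reach k.+1 u v.
Proof.
elim: k u => [|k IHk] u /=; first by move=> ->.
by case/orP=> [->//|/hasP[p pu /IHk uv]]; apply/orP; right; apply/hasP; exists p.
Qed.

Lemma reach_le k l u v : k <= l -> reach k u v -> reach l u v.
Proof. by move=> /subnK <-; elim: (l - k) => // n IHn /IHn /reachS. Qed.

Lemma reach_rcons k u v p : reach k u v -> p < deg v -> reach k.+1 u (nbr v p).
Proof.
elim: k u => [|k IHk] u; first by move=> /eqP -> pv; apply: (reach_nbr pv); apply: reach_refl.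
rewrite [reach k.+1 _ _]/= => /orP[/eqP -> pv|/hasP[q]].
  by apply: (reach_nbr pv); apply: reach_refl.
by rewrite mem_ports => qu /IHk uv pv; apply: (reach_nbr qu); apply: uv.
Qed.

Lemma reach_sym k u v : reach k u v -> reach k v u.
Proof.
elim: k u => [|k IHk] u /=; first by rewrite eq_sym.
case/orP=> [/eqP ->|/hasP[q]]; first by rewrite eqxx.
by rewrite mem_ports => qu /IHk /reach_rcons/(_ (ent_lt qu)); rewrite nbr_ent.
Qed.

Definition adj : rel V := [rel a b | has (fun p => nbr a p == b) (ports G a)].

Lemma reach_path k u v : reach k u v -> exists2 s, path adj u s & last u s = v.
Proof.
elim: k u => [|k IHk] u /=; first by move=> /eqP ->; exists [::].
case/orP=> [/eqP ->|/hasP[q qu /IHk[s us sv]]]; first by exists [::].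
by exists (nbr u q :: s); rewrite //= us andbT; apply/hasP; exists q.
Qed.

Lemma path_reach u s : path adj u s -> reach (size s) u (last u s).
Proof.
elim: s u => [|w s IHs] u /=; first by rewrite eqxx.
case/andP=> /hasP[q]; rewrite mem_ports => qu /eqP uw /IHs.
by rewrite -uw; apply: reach_nbr.
Qed.

(* Removing loops from a walk leaves at most #|V| steps. *)
Lemma reach_card k u v : reach k u v -> reach #|V| u v.
Proof.
case/reach_path=> s us <-; case: (shortenP us) => s' us' /card_uniqP s'_uniq _.
apply: reach_le (path_reach us'); have := max_card (mem (u :: s')).
by rewrite s'_uniq => /ltnW.
Qed.

Lemma dist_le k u v : reach k u v -> dist u v <= k.
Proof.
move=> uv; rewrite /dist; set s := iota 0 _.
have [kV|Vk] := leqP k #|V|.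
  have [//|kf] := leqP (find (fun k => reach k u v) s) k.
  by have := before_find 0 kf; rewrite nth_iota ?add0n ?uv //; lia.
by have := find_size (fun k => reach k u v) s; rewrite size_iota; lia.
Qed.

Lemma dist_reach u v : connected G -> reach (dist u v) u v.
Proof.
move=> /(_ u v)[k /reach_card uv]; rewrite /dist.
have hs : has (fun k => reach k u v) (iota 0 #|V|.+1).
  by apply/hasP; exists #|V|; rewrite // mem_iota ltnSn.
have := hs; rewrite has_find size_iota => lt.
by have := nth_find 0 hs; rewrite nth_iota.
Qed.

Lemma dist_eq0 r v : connected G -> (dist r v == 0) = (v == r).
Proof.
move=> Gc; apply/eqP/eqP => [rv0|->]; last by apply/eqP; rewrite -leqn0 (dist_le (reach_refl 0 r)).
by have := dist_reach r v Gc; rewrite rv0 /= => /eqP.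
Qed.

Lemma dist_nbr r v p : connected G -> p < deg v ->
  dist r (nbr v p) <= (dist r v).+1 /\ dist r v <= (dist r (nbr v p)).+1.
Proof.
move=> Gc pv; split; first by apply: dist_le; apply: reach_rcons pv; apply: dist_reach.
by rewrite -{1}(nbr_ent pv); apply: dist_le; apply: reach_rcons (ent_lt pv); apply: dist_reach.
Qed.

Lemma dist_parent r v : connected G -> v != r ->
  exists2 p, p < deg v & (dist r (nbr v p)).+1 = dist r v.
Proof.
move=> Gc vr; have : dist r v != 0 by rewrite dist_eq0.
have := dist_reach r v Gc; case E: (dist r v) => [//|k] /reach_sym /=.
rewrite (negbTE vr) /= => /hasP[p]; rewrite mem_ports => pv /reach_sym /dist_le pk _.
by exists p => //; have [_] := dist_nbr r Gc pv; lia.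
Qed.

End PortGraph.

Lemma scan_fst g ps : (scan g ps).1 = has (fun p => (g p).1) ps.
Proof.
elim: ps => //= p ps IHps; case: (g p) => [[] ms] //=.
by case: (scan g ps) IHps => b ms' /= ->.
Qed.

Lemma scan_size g ps B : (forall p, p \in ps -> size (g p).2 <= B) ->
  size (scan g ps).2 <= size ps * B.
Proof.
elim: ps => //= p ps IHps gB; rewrite mulSn.
have {}IHps : size (scan g ps).2 <= size ps * B.
  by apply: IHps => p' p'ps; apply: gB; rewrite inE p'ps orbT.
move: (gB p (mem_head p ps)); case: (g p) => [[] ms] /= gpB; first lia.
by case: (scan g ps) IHps => b ms' /= IHps; rewrite size_cat; lia.
Qed.

Lemma modn_window q B n : B %% q = 0 -> B <= n < B + q -> n %% q = n - B.
Proof.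
by move=> Bq /andP[Bn nBq]; rewrite -{1}(subnKC Bn) -modnDml Bq add0n modn_small //; lia.
Qed.

Lemma modnS_small m q : (m %% q).+1 < q -> m.+1 %% q = (m %% q).+1.
Proof. by move=> lt; rewrite -addn1 -modnDml addn1 modn_small. Qed.

Lemma modn_pred_pos m q : 0 < m %% q -> m.-1 %% q = (m %% q).-1.
Proof.
case: (eqVneq q 1) => [->|q1]; first by rewrite modn1.
move=> m_pos; rewrite modn_pred //; last by apply: leq_trans m_pos (leq_mod _ _).
by rewrite /dvdn eqn0Ngt m_pos.
Qed.

Section WhiteLocalSearch.
Variables (G : pgraph) (r : pV G) (d1 d2 : nat) (f : pV G -> bool * seq nat) (l : nat).
Local Notation deg := (pdeg G).
Local Notation nbr := (pnbr G).
Local Notation ent := (pent G).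
Local Notation black := (black G r d1 d2).
Local Notation wls := (wls G r d1 d2 f l).

Lemma wls_sound (P : nat -> pV G -> Prop) :
  (forall k v p, P k.+1 v -> ~~ (black v && (k.+1 != l)) -> p < deg v -> P k (nbr v p)) ->
  forall k v i, P k v -> (wls k v i).1 -> exists2 u, P 0 u & (f u).1.
Proof.
move=> Pstep; elim=> [|k IHk] v i Pv /=; first by exists v.
case: ifP => // open; rewrite scan_fst => /hasP[p]; rewrite mem_filter mem_ports => /andP[_ pv].
have := IHk _ (Some (ent v p)) (Pstep _ _ _ Pv (negbT open) pv).
by case: (wls k (nbr v p) (Some (ent v p))).
Qed.

Lemma wls_complete (P : nat -> pV G -> option nat -> Prop) :
  (forall v i, P 0 v i -> (f v).1) ->
  (forall k v i, P k.+1 v i -> ~~ (black v && (k.+1 != l)) /\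
     exists p, [/\ p < deg v, Some p != i & P k (nbr v p) (Some (ent v p))]) ->
  forall k v i, P k v i -> (wls k v i).1.
Proof.
move=> P0 Pstep; elim=> [|k IHk] v i Pv /=; first exact: P0 Pv.
have [open [p [pv pi Pw]]] := Pstep _ _ _ Pv.
rewrite (negbTE open) scan_fst; apply/hasP; exists p; first by rewrite mem_filter mem_ports pv pi.
by have := IHk _ _ Pw; case: (wls k (nbr v p) (Some (ent v p))).
Qed.

End WhiteLocalSearch.

Section Classification.
Variables (G : pgraph) (r : pV G) (d1 d2 : nat).
Hypotheses (Gc : connected G) (d1_ge2 : 2 <= d1) (d1_le_half : d1 <= d2./2).
Local Notation deg := (pdeg G).
Local Notation nbr := (pnbr G).
Local Notation ent := (pent G).
Local Notation d v := (dist G r v).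
Local Notation q := (d1 + d2 + 2).
Local Notation black := (black G r d1 d2).
Local Notation isBnode := (isBnode G r d1 d2).
Local Notation wls := (wls G r d1 d2).
Local Notation isB_report := (isB_report G r d1 d2).
Local Notation Is_B := (Is_B G r d1 d2).
Local Notation CorD_report := (CorD_report G r d1 d2).

Let d1_double_le : d1 + d1 <= d2.
Proof. by rewrite addnn -geq_half_double. Qed.

Lemma blackE v : black v =
  [|| d v %% q == d2 + 1, d v %% q == d1 + d2 + 1, d v %% q == 0 | d v %% q == 1].
Proof. by []. Qed.

Lemma black_residue v : black v ->
  [\/ d v %% q = 0, d v %% q = 1, d v %% q = d2 + 1 | d v %% q = d1 + d2 + 1].
Proof. by case/or4P=> /eqP; constructor. Qed.

Lemma white_residue v : 1 < d v %% q < d1 + d2 + 1 -> d v %% q != d2 + 1 -> ~~ black v.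
Proof. by move=> rng ne; apply/negP => /black_residue[] res; move: rng ne; rewrite res; lia. Qed.

Lemma dist_nbr_cases v p : p < deg v ->
  [\/ d (nbr v p) = d v, d (nbr v p) = (d v).+1 | (d (nbr v p)).+1 = d v].
Proof.
move=> /(dist_nbr r Gc)[up down].
case: (ltngtP (d (nbr v p)) (d v)) => [lt|gt|->].
- by constructor 3; lia.
- by constructor 2; lia.
- by constructor 1.
Qed.

Lemma nbr_residue v p : p < deg v -> 0 < d v %% q < d1 + d2 + 1 ->
  d (nbr v p) + d v %% q = d (nbr v p) %% q + d v.
Proof.
move=> pv /andP[res_gt0 res_lt]; case: (dist_nbr_cases pv) => [->|->|dv].
- by rewrite addnC.
- by rewrite modnS_small; lia.
- by rewrite -[d (nbr v p)]/((d (nbr v p)).+1.-1) dv modn_pred_pos //; lia.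
Qed.

Lemma neq_root_residue v : 0 < d v %% q -> v != r.
Proof. by move=> pos; rewrite -(dist_eq0 r v Gc); apply/eqP => d0; rewrite d0 mod0n in pos. Qed.

Lemma residue_parent_C v p : p < deg v -> d v %% q = 0 -> (d (nbr v p)).+1 = d v ->
  d (nbr v p) %% q = d1 + d2 + 1.
Proof.
move=> pv vC dp; have q_dvd : q %| d v by rewrite /dvdn vC.
by rewrite -[d (nbr v p)]/((d (nbr v p)).+1.-1) dp modn_pred ?q_dvd //; lia.
Qed.

Lemma C_isBnode v : d v %% q = 0 -> isBnode v.
Proof.
move=> vC; rewrite /isBnode blackE vC eqxx !orbT /=.
apply/allP => p; rewrite mem_ports blackE => pv.
case: (dist_nbr_cases pv) => [->|->|dp].
- by rewrite vC eqxx !orbT.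
- by rewrite modnS_small vC; lia.
- by rewrite (residue_parent_C pv vC dp) eqxx !orbT.
Qed.

Lemma A_notBnode w : d w %% q = d2 + 1 -> ~~ isBnode w.
Proof.
move=> wA; have [p pw dp] : exists2 p, p < deg w & (d (nbr w p)).+1 = d w.
  by apply: (dist_parent Gc); apply: neq_root_residue; rewrite wA addn1.
apply/negP => /andP[_ /allP/(_ p)]; rewrite mem_ports => /(_ pw); apply/negP.
have := nbr_residue pw; rewrite wA -dp => /(_ (ltac:(lia))) res.
by apply: white_residue; lia.
Qed.

Lemma isB_report_fst u : (isB_report u).1 =
  black u && ~~ has (fun p => isBnode (nbr u p)) (ports G u).
Proof.
rewrite /Defs.isB_report; case: (black u) => //=.
set s := scan _ _; have : s.1 = has (fun p => isBnode (nbr u p)) (ports G u).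
  by rewrite scan_fst; apply: eq_has => p /=; case: (bnode_test G r d1 d2 (nbr u p)).
by case: s => b ms /= ->.
Qed.

Lemma isB_report_D u : d u %% q = 1 -> (isB_report u).1 = false.
Proof.
move=> uD; have [p pu dp] : exists2 p, p < deg u & (d (nbr u p)).+1 = d u.
  by apply: (dist_parent Gc); apply: neq_root_residue; rewrite uD.
rewrite isB_report_fst; apply/negbTE; rewrite negb_and negbK; apply/orP; right.
apply/hasP; exists p; rewrite ?mem_ports //; apply: C_isBnode.
have := nbr_residue pu; rewrite uD -dp => /(_ (ltac:(lia))); lia.
Qed.

Lemma isB_report_A u : d u %% q = d2 + 1 -> (isB_report u).1 = true.
Proof.
move=> uA; rewrite isB_report_fst blackE uA eqxx /=.
apply/hasP => -[p]; rewrite mem_ports => pu; apply/negP.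
have := nbr_residue pu; rewrite uA => /(_ (ltac:(lia))) res.
have [wA|wnA] := eqVneq (d (nbr u p) %% q) (d2 + 1); first exact: A_notBnode.
have [up down] := dist_nbr r Gc pu.
by rewrite /isBnode negb_and white_residue //; lia.
Qed.

Lemma Is_B_C y : d y %% q = 0 -> (Is_B y).1 = AnsBnode.
Proof. by move=> yC; rewrite /Defs.Is_B /bnode_test C_isBnode. Qed.

Lemma Is_B_D y : d y %% q = 1 -> (Is_B y).1 <> AnsB.
Proof.
move=> yD; rewrite /Defs.Is_B /bnode_test /=; case: (isBnode y) => //.
case E: (wls isB_report d1 d1 y None) => [[] ms] //= _.
have [B B_mod dy] : exists2 B, B %% q = 0 & d y = B.+1.
  exists (d y).-1; first by rewrite modn_pred_pos yD.
  by rewrite prednK // (leq_trans _ (leq_mod _ q)) // yD.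
(* Inner nodes of the search are white, so they lie at distance at least
   B + 2 (as d1 >= 2) and the reported nodes at distance B + 1 .. B + d1 + 1.
   Only the D-nodes are black there, and their C-node parents are B-nodes. *)
pose P (k : nat) v := [/\ k <= d1, B <= d v <= B + 1 + (d1 - k),
                          k = d1 -> d v = B.+1 & k = 0 -> B.+1 <= d v].
have Pstep k v p : P k.+1 v -> ~~ (black v && (k.+1 != d1)) -> p < deg v -> P k (nbr v p).
  move=> [kd vB top bot] open pv; have [up down] := dist_nbr r Gc pv.
  have [kd1|kd1] := eqVneq k.+1 d1.
    by have dv := top kd1; clear -kd1 dv up down d1_ge2; split; lia.
  have v_far : B.+2 <= d v.
    move: open; rewrite kd1 andbT blackE (modn_window B_mod); last by clear -vB kd; lia.
    by clear -vB; lia.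
  by clear -kd kd1 vB v_far up down; split; lia.
have [u [_ uB _ bot] rep] : exists2 u, P 0 u & (isB_report u).1.
  by apply: (wls_sound Pstep (k := d1) (v := y) (i := None)); [split; lia | rewrite E].
have u_near : d u %% q = d u - B by apply: modn_window => //; clear -uB d1_double_le; lia.
move: (rep); rewrite isB_report_fst => /andP[/black_residue bu _].
by move: rep; rewrite isB_report_D //; case: bu; rewrite u_near; clear -uB bot d1_double_le; lia.
Qed.

Lemma Is_B_B y : d y %% q = d1 + d2 + 1 -> (Is_B y).1 = AnsB.
Proof.
move=> yB; rewrite /Defs.Is_B /bnode_test /=.
have [B B_mod dy] : exists2 B, B %% q = 0 & d y = B + q - 1.
  by exists (d y %/ q * q); rewrite ?modnMl // {1}(divn_eq (d y) q) yB; lia.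
clear yB.
have [p0 p0y dp0] : exists2 p, p < deg y & (d (nbr y p)).+1 = d y.
  by apply: (dist_parent Gc); apply: neq_root_residue; rewrite dy (modn_window B_mod); lia.
have -> : isBnode y = false.
  apply/negbTE; rewrite negb_and; apply/orP; right; apply/allPn; exists p0; rewrite ?mem_ports //.
  by apply: white_residue; rewrite (modn_window B_mod); lia.
case E: (wls isB_report d1 d1 y None) => [[] ms] //=.
(* The search follows parent ports down to an A-node, at distance B + d2 + 1. *)
pose P (k : nat) v i := [/\ k <= d1, d v = B + d2 + 1 + k &
  (i = None \/ exists2 e, i = Some e & (d (nbr v e) = (d v).+1 /\ e < deg v))].
have P0 v i : P 0 v i -> (isB_report v).1.
  by move=> [_ dv _]; rewrite isB_report_A // (modn_window B_mod); lia.
have Pstep k v i : P k.+1 v i -> ~~ (black v && (k.+1 != d1)) /\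
    exists p, [/\ p < deg v, Some p != i & P k (nbr v p) (Some (ent v p))].
  move=> [kd dv up]; split.
    have [_|kd1] := eqVneq k.+1 d1; first by rewrite andbF.
    by rewrite /= andbT white_residue // (modn_window B_mod); lia.
  have [p pv dp] : exists2 p, p < deg v & (d (nbr v p)).+1 = d v.
    by apply: (dist_parent Gc); apply: neq_root_residue; rewrite dv (modn_window B_mod); lia.
  exists p; split => //.
    by case: up => [->//|[e -> [de _]]]; apply/eqP => -[pe]; move: dp; rewrite pe de; lia.
  by split; [clear up; lia | clear up; lia | right; exists (ent v p); rewrite ?nbr_ent ?ent_lt].
have Py : P d1 y None by split; [lia | lia | left].
by have := wls_complete P0 Pstep Py; rewrite E.
Qed.

Lemma CorD_report_fst y : (CorD_report y).1 = black y && answer_eqb (Is_B y).1 AnsB.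
Proof. by rewrite /Defs.CorD_report; case: (black y) => //; case: (Is_B y). Qed.

Lemma C_or_D_C x : d x %% q = 0 -> x != r -> (C_or_D G r d1 d2 x).1 = AnsC.
Proof.
move=> xC xr; rewrite /C_or_D /bnode_test C_isBnode //.
case E: (wls CorD_report 1 1 x None) => [[] ms] //=.
have [p0 p0x dp0] := dist_parent Gc xr.
have y_B := residue_parent_C p0x xC dp0.
pose P (k : nat) v (i : option nat) := [/\ k = 1, v = x & i = None] \/ (k = 0 /\ v = nbr x p0).
have P0 v i : P 0 v i -> (CorD_report v).1.
  case=> [[]//|[_ ->]]; rewrite CorD_report_fst blackE y_B eqxx orTb orbT.
  by rewrite Is_B_B.
have Pstep k v i : P k.+1 v i -> ~~ (black v && (k.+1 != 1)) /\
    exists p, [/\ p < deg v, Some p != i & P k (nbr v p) (Some (ent v p))].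
  by case=> [[[->] -> ->]|[]//]; split; [rewrite andbF | exists p0; split => //; right].
have Px : P 1 x None by left.
by have := wls_complete P0 Pstep Px; rewrite E.
Qed.

Lemma C_or_D_D x : d x %% q = 1 -> (C_or_D G r d1 d2 x).1 = AnsD.
Proof.
move=> xD; have B_mod : (d x).-1 %% q = 0 by rewrite modn_pred_pos xD.
have x_pos : 0 < d x by apply: leq_trans (leq_mod _ q); rewrite xD.
have no_found : (wls CorD_report 1 1 x None).1 = false.
  rewrite /= andbF scan_fst; apply/hasPn => p; rewrite mem_filter mem_ports => /andP[_ px].
  have [up down] := dist_nbr r Gc px.
  have res : d (nbr x p) %% q = d (nbr x p) - (d x).-1 by apply: modn_window; lia.
  case E: (CorD_report (nbr x p)) => [b ms] /=; move: E => /(f_equal fst) /= <-.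
  rewrite /Defs.CorD_report; case bw: (black (nbr x p)) => //.
  case: (Is_B (nbr x p)) (Is_B_C (y := nbr x p)) (Is_B_D (y := nbr x p)) => a m /= IsC IsD.
  have : d (nbr x p) %% q = 0 \/ d (nbr x p) %% q = 1.
    case/black_residue: bw; rewrite res => wres; [left | right | exfalso | exfalso];
      by clear -wres up down x_pos d1_ge2 d1_double_le; lia.
  by case=> [/IsC -> | /IsD]; case: a {IsC IsD}.
rewrite /C_or_D /bnode_test; case: (wls CorD_report 1 1 x None) no_found => b ms /= ->.
by case: (isBnode x).
Qed.

Lemma C_or_D_correct x : x != r -> inC G r d1 d2 x || inD G r d1 d2 x ->
  (C_or_D G r d1 d2 x).1 = if inC G r d1 d2 x then AnsC else AnsD.
Proof.
move=> xr /orP[/eqP xC|/eqP xD]; first by rewrite /inC xC eqxx (C_or_D_C xC xr).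
by rewrite /inC xD (C_or_D_D xD).
Qed.

End Classification.

Lemma leq_expS n k : n <= n ^ k.+1.
Proof. by case: n => // n; rewrite expnS leq_pmulr ?expn_gt0. Qed.

Lemma size_flatten_pairs (f : nat -> nat) (s : seq nat) :
  size (flatten [seq [:: p; f p] | p <- s]) = (size s).*2.
Proof. by elim: s => //= p s ->. Qed.

Section MoveCount.
Variables (G : pgraph) (r : pV G) (d1 d2 : nat).
Local Notation deg := (pdeg G).
Local Notation nbr := (pnbr G).
Local Notation ent := (pent G).
Local Notation D := (maxdeg G).
Local Notation wls := (wls G r d1 d2).
Local Notation isB_report := (isB_report G r d1 d2).
Local Notation CorD_report := (CorD_report G r d1 d2).

Lemma size_bnode_test v : size (bnode_test G r d1 d2 v).2 = (deg v).*2.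
Proof. by rewrite size_flatten_pairs size_ports. Qed.

Lemma size_ports_without v e : e < deg v ->
  size [seq p <- ports G v | Some p != Some e] <= (deg v).-1.
Proof.
move=> ev; rewrite size_filter -(size_ports v) -(count_predC (fun p => Some p != Some e)).
suff : 0 < count (predC (fun p => Some p != Some e)) (ports G v) by lia.
by rewrite -has_count; apply/hasP; exists e; rewrite ?mem_ports //= eqxx.
Qed.

Lemma size_ports_le v (a : pred nat) : size [seq p <- ports G v | a p] <= D.
Proof. by rewrite size_filter (leq_trans (count_size _ _)) // size_ports deg_le_maxdeg. Qed.

Lemma size_isB_report u : size (isB_report u).2 <= 4 * D ^ 2.
Proof.
rewrite /Defs.isB_report; case: (Defs.black _ _ _ _ u) => //=.
set s := scan _ _; suff : size s.2 <= D * (D.*2 + 2).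
  by have := leq_expS D 1; case: s => b ms /=; rewrite !expnS expn0 muln1 -mul2n; nia.
apply: (leq_trans (scan_size (B := D.*2 + 2) _)).
  move=> p _ /=; rewrite size_cat size_flatten_pairs size_ports -!mul2n /=.
  by have := deg_le_maxdeg (nbr u p); lia.
by rewrite leq_mul2r size_ports deg_le_maxdeg orbT.
Qed.

Lemma size_wls_inport k v e : e < deg v ->
  size (wls isB_report d1 k v (Some e)).2 <= 4 * D ^ k.+2.
Proof.
elim: k v e => [|k IHk] v e ev /=; first exact: size_isB_report.
case: ifP => _ //; apply: (leq_trans (scan_size (B := 4 * D ^ k.+2 + 2) _)).
  move=> p; rewrite mem_filter mem_ports => /andP[_ pv].
  have := IHk _ _ (ent_lt pv).
  case: (wls isB_report d1 k (nbr v p) (Some (ent v p))) => b ms /=.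
  by rewrite size_cat /=; move: (4 * D ^ k.+2) => X; lia.
apply: (leq_trans (leq_mul (size_ports_without ev) (leqnn _))).
have := deg_le_maxdeg v; have := leq_expS D k.+1; rewrite [D ^ k.+3]expnS.
by move: (D ^ k.+2) (deg v) => X [|n] /=; nia.
Qed.

Lemma size_wls_root f l k y B :
  (forall v p, p < deg v -> size (wls f l k (nbr v p) (Some (ent v p))).2 <= B) ->
  size (wls f l k.+1 y None).2 <= D * B.+2.
Proof.
move=> Hk /=; case: ifP => _ //.
apply: (leq_trans (scan_size (B := B.+2) _)); last by rewrite leq_mul2r size_ports_le orbT.
move=> p; rewrite mem_filter mem_ports => /andP[_ py]; have := Hk _ _ py.
by case: (wls f l k (nbr y p) (Some (ent y p))) => b ms /=; rewrite size_cat /= addn1.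
Qed.

Lemma size_Is_B y : 0 < d1 -> size (Is_B G r d1 d2 y).2 <= 8 * D ^ d1.+2.
Proof.
move=> d1_pos; rewrite /Defs.Is_B.
have := size_wls_root y (fun v p pv => size_wls_inport d1.-1 (ent_lt pv)).
rewrite prednK //; case: (bnode_test G r d1 d2 y) (size_bnode_test y) => [[]] m0 /= sm0.
  have := deg_le_maxdeg y; have := leq_expS D d1.+1; rewrite sm0 -mul2n.
  by move: (D ^ d1.+2) => X; lia.
case: (wls isB_report d1 d1 y None) => b m1 /=; rewrite size_cat sm0 -mul2n.
have := deg_le_maxdeg y; have := leq_expS D d1.+1; rewrite [D ^ d1.+2]expnS.
by move: (D ^ d1.+1) => X; nia.
Qed.

Lemma size_CorD_report y : 0 < d1 -> size (CorD_report y).2 <= 8 * D ^ d1.+2.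
Proof.
move=> d1_pos; rewrite /Defs.CorD_report; case: (Defs.black _ _ _ _ _) => //.
by case: (Is_B G r d1 d2 y) (size_Is_B y d1_pos) => a m.
Qed.

Lemma size_C_or_D x : 0 < d1 -> size (C_or_D G r d1 d2 x).2 <= 12 * D ^ (d1 + 3).
Proof.
move=> d1_pos; rewrite /C_or_D.
have := size_wls_root (f := CorD_report) (l := 1) (k := 0) x
  (fun v p _ => size_CorD_report (nbr v p) d1_pos).
case: (wls CorD_report 1 1 x None) => b m1 h; rewrite /= in h.
case: (bnode_test G r d1 d2 x) (size_bnode_test x) => bn m0 /= sm0.
have := deg_le_maxdeg x; have := leq_expS D d1.+2; rewrite addn3 [D ^ d1.+3]expnS.
by move: (D ^ d1.+2) h => X h; case: bn => /=; rewrite ?size_cat sm0 -mul2n; nia.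
Qed.

End MoveCount.

Inductive mode := Start | Probe | ProbeBack | Arrive | Return of bool.

(* The stack lists the entry ports leading back to the start node [x]; its
   size is the depth: 0 at [x], 1 at the neighbour [y] tested by [Is_B],
   2 .. d1+1 inside the white local search from [y], and d1+2 at the
   neighbours probed when a node is reported.  The boolean accumulates the
   colours seen while probing the neighbours of the current node. *)
Definition state := (mode * bool * seq nat)%type.
Definition halted : state := (Start, false, [::]).

Section Robot.
Variable l : nat.

Definition go_back (P : seq nat) (b : bool) : state * action :=
  ((Return b, false, behead P), AMove (head 0 P)).

Definition skip_inport (P : seq nat) (q : nat) : bool := (2 <= size P <= l) && (q == head 0 P).

(* At depth l+1 a search succeeds when no B-node neighbour was found. *)
Definition scan_exit (P : seq nat) (found : bool) : state * action :=
  if size P == 0 then (halted, AHalt (if found then AnsC else AnsD))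
  else go_back P (found (+) (size P == l.+1)).

Definition scan_from (P : seq nat) (g q : nat) : state * action :=
  let q' := if skip_inport P q then q.+1 else q in
  if q' < g then ((Arrive, false, P), AMove q') else scan_exit P false.

Definition probe_done (P : seq nat) (acc : bool) (g : nat) : state * action :=
  match size P with
  | 0 => if acc then scan_from P g 0 else (halted, AHalt AnsD)
  | 1 => if acc then go_back P false else scan_from P g 0
  | _ => go_back P acc
  end.

Definition probe_from (P : seq nat) (acc : bool) (g q : nat) : state * action :=
  if q < g then ((Probe, acc, P), AMove q) else probe_done P acc g.

Definition robot_step (s : state) (i : nat * bool * option nat) : state * action :=
  let: (g, c, e) := i in
  let: (m, acc, P) := s in
  match m with
  | Start => probe_from [::] c g 0
  | Probe => ((ProbeBack, acc && c, P), AMove (odflt 0 e))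
  | ProbeBack => probe_from P acc g (odflt 0 e).+1
  | Arrive =>
      let e' := odflt 0 e in
      let bounce := ((Return false, false, P), AMove e') in
      if size P == 0 then (if c then probe_from [:: e'] true g 0 else bounce)
      else if size P < l then (if c then bounce else scan_from (e' :: P) g 0)
      else if size P == l then (if c then scan_from (e' :: P) g 0 else bounce)
      else probe_from (e' :: P) c g 0
  | Return b => if b then scan_exit P true else scan_from P g (odflt 0 e).+1
  end.

End Robot.

(* One visit of the neighbour behind port [p]: it is convertible to the body
   of every scan in the procedures of [Defs]. *)
Definition wrap (G : pgraph) (v : pV G) (F : nat -> bool * seq nat) (p : nat) :=
  let (b, ms) := F p in (b, p :: ms ++ [:: pent G v p]).

Lemma wrapE G v F p : wrap v F p = ((F p).1, p :: (F p).2 ++ [:: pent G v p]).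
Proof. by rewrite /wrap; case: (F p). Qed.

Section Simulation.
Variables (G : pgraph) (r : pV G) (d1 d2 : nat).
Hypothesis d1_ge2 : 2 <= d1.
Local Notation V := (pV G).
Local Notation deg := (pdeg G).
Local Notation nbr := (pnbr G).
Local Notation ent := (pent G).
Local Notation col := (black G r d1 d2).
Local Notation step := (robot_step d1).
Local Notation probe_from := (probe_from d1).
Local Notation probe_done := (probe_done d1).
Local Notation scan_from := (scan_from d1).
Local Notation scan_exit := (scan_exit d1).
Local Notation skip_inport := (skip_inport d1).
Local Notation wls := (wls G r d1 d2).

Definition stack_ok (P : seq nat) := (size P <= d1.+2) && all (fun n => n < maxdeg G) P.
Definition state_ok (s : state) := stack_ok s.2.

Inductive Steps : state -> V -> option nat -> seq nat -> state -> V -> option nat -> Prop :=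
| Steps0 s v e : Steps s v e [::] s v e
| StepsS s v e s1 p ps s2 v2 e2 : state_ok s -> step s (deg v, col v, e) = (s1, AMove p) ->
    Steps s1 (nbr v p) (Some (ent v p)) ps s2 v2 e2 -> Steps s v e (p :: ps) s2 v2 e2.

Lemma Steps_cat s v e ps s1 v1 e1 ps' s2 v2 e2 :
  Steps s v e ps s1 v1 e1 -> Steps s1 v1 e1 ps' s2 v2 e2 -> Steps s v e (ps ++ ps') s2 v2 e2.
Proof. by elim=> // {}s {}v {}e s' p {}ps s'' v'' e'' ok st _ IH /IH; apply: StepsS. Qed.

Lemma Steps1 s v e s1 p : state_ok s -> step s (deg v, col v, e) = (s1, AMove p) ->
  Steps s v e [:: p] s1 (nbr v p) (Some (ent v p)).
Proof. by move=> ok st; apply: StepsS ok st (Steps0 _ _ _). Qed.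

Lemma Steps_follow s v e ps s' v' e' : Steps s v e ps s' v' e' -> follow G v ps = v'.
Proof. by elim=> //= {}s {}v {}e s1 p {}ps s2 v2 e2 _ _ _ ->. Qed.

Definition child_run (P : seq nat) (v : V) (F : nat -> bool * seq nat) (p : nat) : Prop :=
  Steps (Arrive, false, P) (nbr v p) (Some (ent v p)) ((F p).2 ++ [:: ent v p])
        (Return (F p).1, false, P) v (Some p).

Lemma Steps_return s e v p b P : state_ok s -> p < deg v ->
  step s (deg (nbr v p), col (nbr v p), e) = ((Return b, false, P), AMove (ent v p)) ->
  Steps s (nbr v p) e [:: ent v p] (Return b, false, P) v (Some p).
Proof. by move=> ok pv /(Steps1 ok); rewrite nbr_ent // ent_ent. Qed.

Lemma stack_ok_cons v p P : p < deg v -> stack_ok P -> size P <= d1.+1 -> stack_ok (ent v p :: P).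
Proof.
move=> pv /andP[_ Pdeg] Psize; rewrite /stack_ok /= Pdeg andbT ltnS Psize.
exact: leq_trans (ent_lt pv) (deg_le_maxdeg _).
Qed.

Lemma probe_loop v P : stack_ok P -> forall n q acc s e, deg v - q = n -> state_ok s ->
  step s (deg v, col v, e) = probe_from P acc (deg v) q ->
  exists s' e', [/\ state_ok s',
    Steps s v e (flatten [seq [:: p; ent v p] | p <- iota q n]) s' v e' &
    step s' (deg v, col v, e') =
      probe_done P (acc && all (fun p => col (nbr v p)) (iota q n)) (deg v)].
Proof.
move=> okP; elim=> [|n IHn] q acc s e n_def ok st.
  exists s, e; split; [done | exact: Steps0 |].
  by rewrite st /probe_from ltnNge andbT (_ : deg v <= q) //; lia.
have qv : q < deg v by lia.
have st1 : step s (deg v, col v, e) = ((Probe, acc, P), AMove q) by rewrite st /probe_from qv.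
have Sq : Steps s v e [:: q; ent v q] (ProbeBack, acc && col (nbr v q), P) v (Some q).
  have := Steps1 (v := nbr v q) (e := Some (ent v q)) (okP : state_ok (Probe, acc, P)) (erefl _).
  rewrite nbr_ent // ent_ent // => S2; exact: Steps_cat (Steps1 ok st1) S2.
have [s' [e' [ok' S' st']]] :=
  IHn q.+1 (acc && col (nbr v q)) _ (Some q) (ltac:(lia))
    (okP : state_ok (ProbeBack, _, P)) (erefl _).
by exists s', e'; split => //; [exact: Steps_cat Sq S' | rewrite st' /= andbA].
Qed.

Lemma Steps_probe v P acc s e : stack_ok P -> state_ok s ->
  step s (deg v, col v, e) = probe_from P acc (deg v) 0 ->
  exists s' e', [/\ state_ok s', Steps s v e (bnode_test G r d1 d2 v).2 s' v e' &
    step s' (deg v, col v, e') =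
      probe_done P (acc && all (fun p => col (nbr v p)) (ports G v)) (deg v)].
Proof. by move=> okP ok st; apply: probe_loop okP _ _ _ _ _ (subn0 _) ok st. Qed.

Lemma scan_cons_wrap v F q rest :
  scan (wrap v F) (q :: rest) =
  if (F q).1 then (true, q :: (F q).2 ++ [:: ent v q])
  else ((scan (wrap v F) rest).1, (q :: (F q).2 ++ [:: ent v q]) ++ (scan (wrap v F) rest).2).
Proof. by rewrite /= wrapE; case: (F q).1 => //; case: (scan _ _). Qed.

Lemma scan_from_skip P g q : skip_inport P q -> scan_from P g q = scan_from P g q.+1.
Proof.
move=> skip; rewrite /scan_from skip.
by move: skip; rewrite /skip_inport => /andP[-> /eqP <-]; rewrite /= gtn_eqF.
Qed.

Lemma scan_loop v P (F : nat -> bool * seq nat) : stack_ok P ->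
  (forall p, p < deg v -> ~~ skip_inport P p -> child_run P v F p) ->
  forall n q s e, deg v - q = n -> state_ok s ->
  step s (deg v, col v, e) = scan_from P (deg v) q ->
  let sc := scan (wrap v F) [seq p <- iota q n | ~~ skip_inport P p] in
  exists s' e', [/\ state_ok s', Steps s v e sc.2 s' v e' &
    step s' (deg v, col v, e') = scan_exit P sc.1].
Proof.
move=> okP HF; elim=> [|n IHn] q s e n_def ok st sc.
  exists s, e; split; [done | exact: Steps0 |].
  by rewrite st /scan_from ifF //; apply/negbTE; rewrite -leqNgt; case: ifP; lia.
have qv : q < deg v by lia.
have iotaS : iota q n.+1 = q :: iota q.+1 n by [].
case skip: (skip_inport P q).
  have := IHn q.+1 s e (ltac:(lia)) ok; rewrite -scan_from_skip // => /(_ st).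
  by rewrite /sc iotaS [filter _ (q :: _)]/= skip.
have st1 : step s (deg v, col v, e) = ((Arrive, false, P), AMove q).
  by rewrite st /scan_from skip qv.
have Sq := Steps_cat (Steps1 ok st1) (HF q qv (negbT skip)).
rewrite /sc iotaS [filter _ (q :: _)]/= skip scan_cons_wrap.
case: ifP Sq => Fq Sq; first by exists (Return true, false, P), (Some q).
have [s' [e' [ok' S' st']]] :=
  IHn q.+1 _ (Some q) (ltac:(lia)) (okP : state_ok (Return false, false, P)) (erefl _).
exists s', e'; split => //; rewrite -cat_cons; exact: Steps_cat Sq S'.
Qed.

Lemma scan_exit_return v p P found : size P <= d1 ->
  scan_exit (ent v p :: P) found = go_back (ent v p :: P) (found (+) (size P == d1)).
Proof. by move=> Psize; rewrite /scan_exit. Qed.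

Lemma Steps_scan_return v p P (F : nat -> bool * seq nat) s e0 :
  let w := nbr v p in let e := ent v p in
  p < deg v -> stack_ok (e :: P) -> size P <= d1 ->
  (forall q, q < deg w -> ~~ skip_inport (e :: P) q -> child_run (e :: P) w F q) ->
  state_ok s -> step s (deg w, col w, e0) = scan_from (e :: P) (deg w) 0 ->
  Steps s w e0 ((scan (wrap w F) [seq q <- ports G w | ~~ skip_inport (e :: P) q]).2 ++ [:: e])
    (Return ((scan (wrap w F) [seq q <- ports G w | ~~ skip_inport (e :: P) q]).1
               (+) (size P == d1)), false, P) v (Some p).
Proof.
move=> w e pv okP Psize HF ok st; subst w e.
have [s' [e' [ok' S' st']]] := scan_loop okP HF (subn0 _) ok st.
apply: (Steps_cat S'); apply: (Steps_return ok' pv).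
by rewrite st' scan_exit_return.
Qed.

Lemma filter_no_skip P s : ~~ (2 <= size P <= d1) -> [seq q <- s | ~~ skip_inport P q] = s.
Proof.
move=> Psize; rewrite (eq_filter (a2 := predT)) ?filter_predT // => q.
by rewrite /skip_inport (negbTE Psize).
Qed.

Lemma bnode_child v p P : size P = d1.+1 -> stack_ok P -> p < deg v ->
  child_run P v (fun q => bnode_test G r d1 d2 (nbr v q)) p.
Proof.
move=> Psize okP pv; rewrite /child_run /=.
have okP' : stack_ok (ent v p :: P) by apply: stack_ok_cons; rewrite ?Psize.
have st : step (Arrive, false, P) (deg (nbr v p), col (nbr v p), Some (ent v p)) =
          probe_from (ent v p :: P) (col (nbr v p)) (deg (nbr v p)) 0.
  by rewrite /= Psize ifF ?ifF //; lia.
have [s' [e' [ok' S' st']]] := Steps_probe okP' (okP : state_ok (Arrive, false, P)) st.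
by apply: (Steps_cat S'); apply: Steps_return ok' pv _; rewrite st' /probe_done /= Psize.
Qed.

Lemma report_child v p P : size P = d1 -> stack_ok P -> p < deg v ->
  child_run P v (fun q => isB_report G r d1 d2 (nbr v q)) p.
Proof.
move=> Psize okP pv; rewrite /child_run; have ok : state_ok (Arrive, false, P) by [].
have st : step (Arrive, false, P) (deg (nbr v p), col (nbr v p), Some (ent v p)) =
          if col (nbr v p) then scan_from (ent v p :: P) (deg (nbr v p)) 0
          else ((Return false, false, P), AMove (ent v p)).
  by rewrite /= Psize ltnn eqxx ifF //; lia.
rewrite /Defs.isB_report; case cw: (col (nbr v p)); last first.
  by apply: Steps_return ok pv _; rewrite st cw.
rewrite [in X in _ = X]cw in st.
have okP' : stack_ok (ent v p :: P) by apply: stack_ok_cons; rewrite ?Psize.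
have HF q : q < deg (nbr v p) -> ~~ skip_inport (ent v p :: P) q ->
    child_run (ent v p :: P) (nbr v p) (fun q => bnode_test G r d1 d2 (nbr (nbr v p) q)) q.
  by move=> qw _; apply: bnode_child; rewrite //= Psize.
have := Steps_scan_return pv okP' (eq_leq Psize) HF ok st.
rewrite filter_no_skip /= ?Psize ?ltnn ?andbF // eqxx addbT.
by case: (scan _ _).
Qed.

Lemma wls_child k v p P : size P + k = d1 -> 0 < size P -> stack_ok P -> p < deg v ->
  child_run P v (fun q => wls (isB_report G r d1 d2) d1 k (nbr v q) (Some (ent v q))) p.
Proof.
elim: k v p P => [|k IHk] v p P Psize P_pos okP pv.
  by apply: report_child; rewrite // -Psize addn0.
rewrite /child_run.
have ok : state_ok (Arrive, false, P) by [].
have st : step (Arrive, false, P) (deg (nbr v p), col (nbr v p), Some (ent v p)) =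
          if col (nbr v p) then ((Return false, false, P), AMove (ent v p))
          else scan_from (ent v p :: P) (deg (nbr v p)) 0.
  have Pd : size P < d1 by lia.
  by rewrite /= (negbTE (lt0n_neq0 P_pos)) Pd.
rewrite [wls _ _ k.+1 _ _]/= (_ : k.+1 != d1); last by apply/eqP; lia.
case cw: (col (nbr v p)); first by apply: Steps_return ok pv _; rewrite st cw.
rewrite [in X in _ = X]cw in st.
have okP' : stack_ok (ent v p :: P).
  by apply: stack_ok_cons; rewrite ?(leq_trans _ (leqnSn _)) //; lia.
have HF q : q < deg (nbr v p) -> ~~ skip_inport (ent v p :: P) q ->
    child_run (ent v p :: P) (nbr v p)
      (fun q => wls (isB_report G r d1 d2) d1 k (nbr (nbr v p) q) (Some (ent (nbr v p) q))) q.
  by move=> qw _; apply: IHk => //=; lia.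
have inport_skipped : [seq q <- ports G (nbr v p) | ~~ skip_inport (ent v p :: P) q] =
                      [seq q <- ports G (nbr v p) | Some q != Some (ent v p)].
  by apply: eq_filter => q; rewrite /skip_inport /= (_ : 1 < (size P).+1 <= d1) //; lia.
have := Steps_scan_return pv okP' (ltac:(lia)) HF ok st.
have Pd : (size P == d1) = false by apply/negbTE; lia.
by rewrite inport_skipped Pd addbF.
Qed.

Lemma wls_succ f l k v i : wls f l k.+1 v i =
  if col v && (k.+1 != l) then (false, [::])
  else scan (wrap v (fun q => wls f l k (nbr v q) (Some (ent v q))))
            [seq q <- ports G v | Some q != i].
Proof. by []. Qed.

Lemma wls_root f l y : 0 < l -> wls f l l y None =
  scan (wrap y (fun q => wls f l l.-1 (nbr y q) (Some (ent y q)))) (ports G y).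
Proof.
case: l => // l _; rewrite wls_succ eqxx andbF.
by rewrite (eq_filter (a2 := predT)) ?filter_predT.
Qed.

Lemma CorD_child x p : p < deg x -> child_run [::] x (fun q => CorD_report G r d1 d2 (nbr x q)) p.
Proof.
move=> px; rewrite /child_run; have ok : state_ok (Arrive, false, [::]) by [].
rewrite /Defs.CorD_report; case cy: (col (nbr x p)); last first.
  by apply: Steps_return ok px _; rewrite /= cy.
have okP : stack_ok [:: ent x p] by apply: stack_ok_cons.
have st : step (Arrive, false, [::]) (deg (nbr x p), col (nbr x p), Some (ent x p)) =
          probe_from [:: ent x p] true (deg (nbr x p)) 0 by rewrite /= cy.
have [s1 [e1 [ok1 S1 st1]]] := Steps_probe okP ok st.
rewrite /Defs.Is_B /bnode_test /isBnode cy /=; rewrite [probe_done _ _ _]/= in st1.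
case: (all _ _) st1 => st1.
  by apply: (Steps_cat S1); apply: Steps_return ok1 px _; rewrite st1.
have HF q : q < deg (nbr x p) -> ~~ skip_inport [:: ent x p] q ->
    child_run [:: ent x p] (nbr x p)
      (fun q => wls (isB_report G r d1 d2) d1 d1.-1 (nbr (nbr x p) q) (Some (ent (nbr x p) q))) q.
  by move=> qy _; apply: wls_child => //=; lia.
have := Steps_scan_return px okP (leq0n _) HF ok1 st1.
have d1_neq0 : (0 == d1) = false by apply/negbTE; lia.
rewrite filter_no_skip // wls_root ?(leq_trans _ d1_ge2) // d1_neq0 addbF.
case: (scan _ _) => found m1 S2; rewrite -catA; apply: (Steps_cat S1).
by case: found S2.
Qed.

Lemma C_or_D_run x e0 : exists s' e', [/\ state_ok s',
  Steps (Start, false, [::]) x e0 (C_or_D G r d1 d2 x).2 s' x e' &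
  step s' (deg x, col x, e') = (halted, AHalt (C_or_D G r d1 d2 x).1)].
Proof.
have ok : state_ok (Start, false, [::]) by [].
have [s1 [e1 [ok1 S1 st1]]] := Steps_probe (v := x) (e := e0) (isT : stack_ok [::]) ok (erefl _).
rewrite [probe_done _ _ _]/= in st1; rewrite /C_or_D /bnode_test /isBnode.
case: (_ && _) st1 => st1; last by exists s1, e1.
have HF q : q < deg x -> ~~ skip_inport [::] q ->
    child_run [::] x (fun q => CorD_report G r d1 d2 (nbr x q)) q.
  by move=> qx _; apply: CorD_child.
have [s' [e' [ok' S' st']]] := scan_loop (isT : stack_ok [::]) HF (subn0 _) ok1 st1.
rewrite filter_no_skip // in S' st'.
rewrite wls_root //.
move: S' st'; case: (scan _ _) => found m1 /= S' st'.
by exists s', e'; split; [done | exact: Steps_cat S1 S' | rewrite st'].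
Qed.

End Simulation.

Fixpoint pos_bits (p : positive) : seq bool :=
  match p with xI p => true :: pos_bits p | xO p => false :: pos_bits p | xH => [::] end.

Fixpoint bits_pos (l : seq bool) : positive :=
  match l with [::] => xH | b :: l => (if b then xI else xO) (bits_pos l) end.

Lemma pos_bitsK : cancel pos_bits bits_pos.
Proof. by elim=> //= p ->. Qed.

Lemma exp2_size_pos_bits p : 2 ^ size (pos_bits p) <= Pos.to_nat p.
Proof.
elim: p => [p IHp|p IHp|] /=; last by rewrite Pos2Nat.inj_1.
- by rewrite Pos2Nat.inj_xI expnS; lia.
- by rewrite Pos2Nat.inj_xO expnS; lia.
Qed.

Definition nat_bits (n : nat) : seq bool := pos_bits (Pos.of_succ_nat n).
Definition bits_nat (l : seq bool) : nat := (Pos.to_nat (bits_pos l)).-1.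

Lemma nat_bitsK : cancel nat_bits bits_nat.
Proof. by move=> n; rewrite /bits_nat /nat_bits pos_bitsK SuccNat2Pos.id_succ. Qed.

Lemma size_nat_bits n N : n < N -> size (nat_bits n) < nbits N.
Proof.
move=> nN; have := exp2_size_pos_bits (Pos.of_succ_nat n); rewrite SuccNat2Pos.id_succ => bits_le.
rewrite /nbits -(ltn_exp2l _ _ (isT : 1 < 2)); apply: leq_ltn_trans bits_le _.
exact: leq_ltn_trans nN (trunc_log_ltn _ (isT : 1 < 2)).
Qed.

(* Self-delimiting code: each bit [b] becomes [true; b], a number ends with
   [false; true] and a list of numbers with [false; false]. *)
Definition code (n : nat) : seq bool :=
  flatten [seq [:: true; b] | b <- nat_bits n] ++ [:: false; true].
Definition codes (ns : seq nat) : seq bool := flatten (map code ns) ++ [:: false; false].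

Fixpoint split_codes (l : seq bool) (cur : seq bool) : seq (seq bool) :=
  match l with
  | true :: b :: l' => split_codes l' (rcons cur b)
  | false :: true :: l' => cur :: split_codes l' [::]
  | _ => [::]
  end.

Definition decodes (l : seq bool) : seq nat := map bits_nat (split_codes l [::]).

Lemma split_codes_bits s rest cur :
  split_codes (flatten [seq [:: true; b] | b <- s] ++ rest) cur = split_codes rest (cur ++ s).
Proof. by elim: s cur => [|b s IHs] cur /=; rewrite ?cats0 // IHs cat_rcons. Qed.

Lemma decodesK : cancel codes decodes.
Proof.
move=> ns; rewrite /decodes -[RHS](mapK nat_bitsK); congr map.
by elim: ns => //= n ns IHns; rewrite /codes /= /code -!catA split_codes_bits /= -IHns.
Qed.

Lemma size_code n : size (code n) = (size (nat_bits n)).*2 + 2.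
Proof.
by rewrite size_cat /=; congr (_ + 2); elim: (nat_bits n) => //= b s ->.
Qed.

Definition mode_code (m : mode) : nat :=
  match m with Start => 0 | Probe => 1 | ProbeBack => 2 | Arrive => 3
  | Return false => 4 | Return true => 5 end.

Definition code_mode (n : nat) : mode :=
  match n with 0 => Start | 1 => Probe | 2 => ProbeBack | 3 => Arrive
  | 4 => Return false | _ => Return true end.

Lemma mode_codeK : cancel mode_code code_mode.
Proof. by case=> // [[]]. Qed.

Definition encode (s : state) : seq bool :=
  let: (m, acc, P) := s in codes ((acc + (mode_code m).*2) :: P).

Definition decode (l : seq bool) : state :=
  if decodes l is h :: P then (code_mode h./2, odd h, P) else halted.

Lemma encodeK : cancel encode decode.
Proof.
case=> [[m acc] P]; rewrite /decode /encode decodesK half_bit_double.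
by rewrite oddD odd_double addbF oddb mode_codeK.
Qed.

Lemma size_encode d1 N s : 2 <= d1 -> size s.2 <= d1.+2 -> all (fun n => n < N) s.2 ->
  size (encode s) <= 20 * (d1 * nbits N).
Proof.
case: s => [[m acc] P] /= d1_ge2 Psize Pbound.
have head_bits : size (nat_bits (acc + (mode_code m).*2)) <= 4.
  by rewrite -ltnS; apply: (size_nat_bits (N := 16)); case: acc; case: m => // [[]].
have body : size (flatten (map code P)) <= size P * (2 * nbits N).
  elim: P {Psize} Pbound => //= n P IHP /andP[nN Pbound].
  by rewrite size_cat size_code -mul2n; have := size_nat_bits nN; have := IHP Pbound; nia.
rewrite /codes size_cat /= size_cat /= size_code; move: (size (nat_bits _)) head_bits => h h_le.
have := leq_mul Psize (leqnn (2 * nbits N)); have : 0 < nbits N by [].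
by move: (nbits N) body => k body; rewrite -mul2n; nia.
Qed.

Definition robot (d1 : nat) : agent :=
  Agent (encode (Start, false, [::]))
        (fun m i => let (s', act) := robot_step d1 (decode m) i in (encode s', act)).

Arguments robot_step : simpl never.

Section Run.
Variables (G : pgraph) (r : pV G) (d1 d2 : nat).
Local Notation deg := (pdeg G).
Local Notation col := (black G r d1 d2).

Lemma arun_move fuel m v e s1 p : robot_step d1 (decode m) (deg v, col v, e) = (s1, AMove p) ->
  arun G col (robot d1) fuel.+1 m v e =
  let '(ms, ps, res) := arun G col (robot d1) fuel (encode s1) (pnbr G v p) (Some (pent G v p)) in
  (m :: ms, p :: ps, res).
Proof. by move=> st /=; rewrite st. Qed.

Lemma arun_Steps (bound : nat) s v e ps s' v' e' s'' a :
  (forall t, state_ok G d1 t -> size (encode t) <= bound) ->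
  Steps r d1 d2 s v e ps s' v' e' -> state_ok G d1 s' -> state_ok G d1 s'' ->
  robot_step d1 s' (deg v', col v', e') = (s'', AHalt a) ->
  exists mems, arun G col (robot d1) (size ps).+1 (encode s) v e = (mems, ps, Some a) /\
    all (fun m => size m <= bound) mems.
Proof.
move=> encode_le; elim=> {s v e ps s' v' e'} [s v e ok ok'' st|].
  by exists [:: encode s; encode s'']; rewrite /= encodeK st /= !encode_le.
move=> s v e s1 p ps s2 v2 e2 ok st _ IH ok2 ok'' st2.
have [mems [run mems_le]] := IH ok2 ok'' st2.
have st' : robot_step d1 (decode (encode s)) (deg v, col v, e) = (s1, AMove p) by rewrite encodeK.
by exists (encode s :: mems); rewrite (arun_move _ st') run /= encode_le.
Qed.

End Run.

Theorem lemma3 :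
  exists (c_mem c_mov : nat) (A : nat -> nat -> agent),
  forall (G : pgraph) (r : pV G) (d1 d2 : nat) (x : pV G),
    connected G ->
    2 <= d1 -> d1 <= d2./2 ->
    d1 + d2 + 1 <= diam G ->
    x != r ->
    inC G r d1 d2 x || inD G r d1 d2 x ->
    let res := C_or_D G r d1 d2 x in
    [/\ res.1 = AnsC <-> inC G r d1 d2 x,
        res.1 = AnsD <-> inD G r d1 d2 x,
        follow G x res.2 = x,
        size res.2 <= c_mov * maxdeg G ^ (d1 + 3) &
        forall e0 : option nat, exists fuel mems,
          arun G (black G r d1 d2) (A d1 d2) fuel (a_init (A d1 d2)) x e0
            = (mems, res.2, Some res.1)
          /\ all (fun m => size m <= c_mem * (d1 * nbits (maxdeg G))) mems].
Proof.
exists 20, 12, (fun d1 _ => robot d1).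
move=> G r d1 d2 x Gc d1_ge2 d1_le _ xr xCD res.
have answer := C_or_D_correct Gc d1_ge2 d1_le xr xCD.
have CnD : inC G r d1 d2 x -> ~~ inD G r d1 d2 x by rewrite /inC /inD => /eqP ->.
have [s' [e' [ok' S' st']]] := C_or_D_run r d2 d1_ge2 x None.
split.
- by rewrite /res answer; case: ifP.
- rewrite /res answer; case: ifP => [/CnD/negbTE -> //|nC].
  by case/orP: xCD => [xC|->]; first by rewrite xC in nC.
- exact: Steps_follow S'.
- by apply: size_C_or_D; lia.
move=> e0; have [s2 [e2 [ok2 S2 st2]]] := C_or_D_run r d2 d1_ge2 x e0.
have encode_le t : state_ok G d1 t -> size (encode t) <= 20 * (d1 * nbits (maxdeg G)).
  by case/andP; apply: size_encode.
have [mems run] := arun_Steps encode_le S2 ok2 (isT : state_ok G d1 halted) st2.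
by exists (size res.2).+1, mems.
Qed.
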